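(* Let $\Sigma=(X,U,F)$ be a system, $Q\subset X$ a controlled invariant set, and $V\subset U$ a finite cover of $Q$. Then $h_{inv}(Q)\le\log\rho(M_{Q,V})$, where $\rho$ denotes the spectral radius.
   Context: A system is a triple $\Sigma=(X,U,F)$ where $X,U$ are nonempty sets and $F:X\times U\rightrightarrows X$ is a set-valued map with $F(x,u)\neq\emptyset$ for all $(x,u)$; for $A\subset X$, $F(A,u)=\bigcup_{x\in A}F(x,u)$. $Q\subset X$ is controlled invariant if for every $x\in Q$ there is $u\in U$ with $F(x,u)\subset Q$. For $u\in U$ put $Q_u=\{x\in Q:F(x,u)\subset Q\}$. Elements of $U^n$ are written $\omega=\omega_0\cdots\omega_{n-1}$, $\omega_{[0,i]}=\omega_0\cdots\omega_i$. A set $S\subset U^n$ is an admissible family of length $n$ for $Q$ if (a) $\omega'_0=\omega''_0$ for all $\omega',\omega''\in S$, and (b) there exists $x\in Q$ such that for every $\omega\in S$, with $I^0_\omega(x)=\{x\}$: for all $i=0,\dots,n-2$, $F(I^i_\omega(x),\omega_i)\subset\bigcup_{\omega'\in S,\ \omega'_{[0,i]}=\omega_{[0,i]}}Q_{\omega'_{i+1}}$ and $I^{i+1}_\omega(x):=F(I^i_\omega(x),\omega_i)\cap Q_{\omega_{i+1}}\neq\emptyset$; and $I^n_\omega(x):=F(I^{n-1}_\omega(x),\omega_{n-1})\subset Q$. Let $AF^n(Q)$ be the set of such families and $Q_S$ the set of $x\in Q$ satisfying (b). A set $\mathscr{S}\subset U^n$ is $(n,Q)$-spanning if $Q\subset\bigcup_{S\subset\mathscr{S},\,S\in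 AF^n(Q)}Q_S$; $r_{inv}(n,Q)$ is the infimum of $\sharp\mathscr{S}$ over such sets, and $h_{inv}(Q)=\limsup_{n\to\infty}\frac1n\log r_{inv}(n,Q)$ ($\log$ base $2$). A set $V\subset U$ is a cover of $Q$ if $Q\subset\bigcup_{a\in V}Q_a$. The admissible matrix $M_{Q,V}=(M_{ab})_{a,b\in V}$ has $M_{ab}=1$ if there exists $x\in Q_a$ with $F(x,a)\cap Q_b\neq\emptyset$, and $M_{ab}=0$ otherwise. *)

From HB Require Import structures.
From mathcomp Require Import all_boot all_order all_algebra.
From mathcomp Require Import all_classical all_reals all_analysis.
From mathcomp Require Import complex.

Set Implicit Arguments.
Unset Strict Implicit.
Unset Printing Implicit Defensive.

Import Order.TTheory GRing.Theory Num.Theory.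
Local Open Scope classical_set_scope.
Local Open Scope ring_scope.

Section InvarianceEntropy.
Variables (X U : Type) (F : X -> U -> set X).

Definition Fimg (A : set X) (u : U) : set X :=
  [set y | exists2 x, A x & F x u y].

Definition controlled_invariant (Q : set X) : Prop :=
  forall x, Q x -> exists u, F x u `<=` Q.

Definition Qu (Q : set X) (u : U) : set X :=
  [set x | Q x /\ F x u `<=` Q].

(* Words omega = omega_0 ... omega_{n-1} in U^n are sequences of size n;
   the letter omega_i is [onth omega i] (= Some omega_i for i < n). *)
Definition words (n : nat) : set (seq U) := [set w | size w = n].

Fixpoint Iset (Q : set X) (x : X) (w : seq U) (i : nat) : set X :=
  match i with
  | 0 => [set x]
  | i'.+1 => [set y | exists a b, onth w i' = Some a /\ onth w i = Some b /\
                       Fimg (Iset Q x w i') a y /\ Qu Q b y]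
  end.

Definition adm_point (n : nat) (Q : set X) (S : set (seq U)) (x : X) : Prop :=
  Q x /\
  forall w, S w ->
    (forall i, (i.+2 <= n)%N ->
       (forall a, onth w i = Some a ->
          Fimg (Iset Q x w i) a `<=`
          [set y | exists w' b, S w' /\ take i.+1 w' = take i.+1 w /\
                                onth w' i.+1 = Some b /\ Qu Q b y]) /\
       Iset Q x w i.+1 !=set0) /\
    (forall a, onth w n.-1 = Some a -> Fimg (Iset Q x w n.-1) a `<=` Q).

Definition QS (n : nat) (Q : set X) (S : set (seq U)) : set X :=
  [set x | adm_point n Q S x].

Definition admissible_family (n : nat) (Q : set X) (S : set (seq U)) : Prop :=
  (0 < n)%N /\ S `<=` words n /\ S !=set0 /\
  (forall w' w'', S w' -> S w'' -> onth w' 0 = onth w'' 0) /\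
  (exists x, adm_point n Q S x).

Definition spanning (n : nat) (Q : set X) (SS : set (seq U)) : Prop :=
  SS `<=` words n /\
  Q `<=` [set x | exists S, S `<=` SS /\ admissible_family n Q S /\ QS n Q S x].

(* V \subset U finite, given as an injective enumeration v : 'I_k -> U;
   V is a cover of Q *)
Definition is_cover (Q : set X) (k : nat) (v : 'I_k -> U) : Prop :=
  Q `<=` [set x | exists a : 'I_k, Qu Q (v a) x].

Section Reals.
Variable R : realType.

(* r_inv(n,Q) = inf of the cardinalities of finite (n,Q)-spanning sets
   (+oo if there is none) *)
Definition r_inv (n : nat) (Q : set X) : \bar R :=
  ereal_inf [set (m%:R)%:E | m in
    [set m : nat | exists w : 'I_m -> seq U,
                   injective w /\ spanning n Q (range w)]].

(* log base 2 on [0, +oo], with log 0 = -oo, log +oo = +oo *)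
Definition log2 (r : R) : \bar R :=
  if r == 0 then -oo%E else (ln r / ln 2)%:E.

Definition elog2 (e : \bar R) : \bar R :=
  match e with
  | r%:E => log2 r
  | +oo%E => +oo%E
  | -oo%E => -oo%E
  end.

Definition h_inv (Q : set X) : \bar R :=
  limn_esup (fun n => ((n%:R^-1)%:E * elog2 (r_inv n Q))%E).

Definition adm_matrix (Q : set X) (k : nat) (v : 'I_k -> U) : 'M[R[i]]_k :=
  \matrix_(a, b) (`[< exists2 x, Qu Q (v a) x & F x (v a) `&` Qu Q (v b) !=set0 >] : nat)%:R.

End Reals.
End InvarianceEntropy.

(* spectral radius: max of |lambda| over the (complex) eigenvalues; 0 for the
   empty (0 x 0) matrix *)
Definition spectral_radius (R : realType) (k : nat) (M : 'M[R[i]]_k) : R :=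
  sup ([set 0] `|` [set Normc.normc l | l in [set l : R[i] | eigenvalue M l]]).

From HB Require Import structures.
From mathcomp Require Import all_boot all_order all_algebra.
From mathcomp Require Import all_classical all_reals all_analysis.
From mathcomp Require Import complex.
From mathcomp Require Import zify ring.
Import Order.TTheory GRing.Theory Num.Theory.
Local Open Scope classical_set_scope.
Local Open Scope ring_scope.
Set Implicit Arguments.
Unset Strict Implicit.
Unset Printing Implicit Defensive.

(* Fix x in Q and a letter a0 of the cover with x in Q_{v a0}.  The words
   v a0, v t_0, v t_1, ... of length n whose sets I^j(x) are all nonempty form an
   admissible family containing x: a point of F(I^i, w_i) lies in Q, hence in some
   Q_{v c}, so every prefix branches into a word of the family, and branches extend
   to full length because F is nonempty-valued.  Consecutive letters of these words
   are adjacent for M = M_{Q,V}, so the paths of length n - 1 in the graph of M form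
   an (n,Q)-spanning set, of size the sum of the entries of M^(n-1).  By
   Cayley-Hamilton this sum is O(r^n) for every r > rho(M), hence h_inv(Q) <= log2 r,
   and letting r decrease to rho(M) gives the claim. *)

Lemma onth_last (T : Type) (x : T) (s : seq T) : onth (x :: s) (size s) = Some (last x s).
Proof. by elim: s x => [|y s IHs] x //=; rewrite -IHs. Qed.

Section Paths.
Variables (T : finType) (e : rel T).

Fixpoint paths (n : nat) (a : T) : seq (seq T) :=
  if n is n'.+1 then [seq b :: p | b <- [seq b <- enum T | e a b], p <- paths n' b]
  else [:: [::]].

Lemma mem_paths n a p : (p \in paths n a) = (size p == n) && path e a p.
Proof.
elim: n a p => [|n IHn] a [|b p] //=.
  by apply/negbTE/allpairsPdep => -[c [q []]].
rewrite eqSS; apply/allpairsPdep/idP.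
- by move=> [c [q [+ + [-> ->]]]]; rewrite mem_filter IHn => /andP[-> _] /andP[-> ->].
- case/and3P=> /eqP sz eab pth; exists b, p.
  by rewrite mem_filter eab mem_enum IHn sz eqxx pth.
Qed.

Definition all_paths (n : nat) : seq (seq T) := [seq a :: p | a <- enum T, p <- paths n a].

Lemma mem_all_paths n a p : size p = n -> path e a p -> a :: p \in all_paths n.
Proof.
move=> sz pth; apply: (allpairs_f_dep (fun a p => a :: p)); first by rewrite mem_enum.
by rewrite mem_paths sz eqxx.
Qed.

End Paths.

Definition adj_mx (R : pzSemiRingType) (k : nat) (e : rel 'I_k) : 'M[R]_k :=
  \matrix_(a, b) (e a b : nat)%:R.

Definition mxsum (R : pzSemiRingType) (k : nat) (A : 'M[R]_k) : R := \sum_a \sum_b A a b.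

Lemma mxsumD (R : pzSemiRingType) k (A B : 'M[R]_k) : mxsum (A + B) = mxsum A + mxsum B.
Proof.
rewrite /mxsum -big_split; apply: eq_bigr => a _.
by rewrite -big_split; apply: eq_bigr => b _; rewrite mxE.
Qed.

Lemma mxsumZ (R : pzSemiRingType) k z (A : 'M[R]_k) : mxsum (z *: A) = z * mxsum A.
Proof.
rewrite /mxsum mulr_sumr; apply: eq_bigr => a _.
by rewrite mulr_sumr; apply: eq_bigr => b _; rewrite mxE.
Qed.

Lemma mxsum0 (R : pzSemiRingType) k : mxsum (0 : 'M[R]_k) = 0.
Proof. by rewrite -(scale0r 0) mxsumZ mul0r. Qed.

Section PathCount.
Variables (R : pzSemiRingType) (k : nat) (e : rel 'I_k).

Lemma size_paths n a : (size (paths e n a))%:R = \sum_b (adj_mx R e ^+ n) a b.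
Proof.
elim: n a => [|n IHn] a /=.
  by rewrite expr0 (bigD1 a) //= big1 => [|b /negbTE nba]; rewrite mxE ?eqxx ?addr0 // eq_sym nba.
rewrite size_allpairs_dep sumnE big_map natr_sum big_filter big_enum_cond /= exprS.
under [RHS]eq_bigr do rewrite mxE.
rewrite exchange_big /= big_mkcond /=; apply: eq_bigr => b _.
by rewrite -mulr_sumr -IHn mxE; case: (e a b); rewrite ?mul1r ?mul0r.
Qed.

Lemma size_all_paths n : (size (all_paths e n))%:R = mxsum (adj_mx R e ^+ n).
Proof.
rewrite size_allpairs_dep sumnE big_map natr_sum big_enum /mxsum.
by apply: eq_bigr => a _; rewrite size_paths.
Qed.

End PathCount.

Section AdmissibleWords.
Variables (X U : Type) (F : X -> U -> set X) (Q : set X).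

Lemma IsetS x w i : Iset F Q x w i.+1 =
  [set y | exists a b, onth w i = Some a /\ onth w i.+1 = Some b /\
                       Fimg F (Iset F Q x w i) a y /\ Qu F Q b y].
Proof. by []. Qed.

Lemma Iset_cat x (w s : seq U) i : (i < size w)%N -> Iset F Q x (w ++ s) i = Iset F Q x w i.
Proof.
elim: i => [//|i IHi] lti.
by rewrite !IsetS !onth_cat lti (ltnW lti) IHi ?(ltnW lti).
Qed.

Lemma Iset_sub_Qu x w a0 i a : onth w 0 = Some a0 -> Qu F Q a0 x ->
  onth w i = Some a -> Iset F Q x w i `<=` Qu F Q a.
Proof.
case: i => [|i] w0 hx; first by rewrite w0 => -[<-] _ ->.
by move=> wi y [? [b [_ [+ [_ qb]]]]]; rewrite wi => -[->].
Qed.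

Lemma r_inv_ge0 (R : realType) n : (0 <= r_inv F R n Q)%E.
Proof. by apply: le_ereal_inf_tmp => _ [m _ <-]; rewrite lee_fin. Qed.

Lemma r_inv_le_size (R : realType) (T : eqType) (f : T -> seq U) (s : seq T) n :
  injective f -> spanning F n Q [set f t | t in [set t | t \in s]] ->
  (r_inv F R n Q <= (size s)%:R%:E)%E.
Proof.
move=> injf span; pose u := in_tuple (undup s).
have inj_u : injective (tnth u) by apply/tuple_uniqP; exact: undup_uniq.
apply: (@le_trans _ _ (size (undup s))%:R%:E); last by rewrite lee_fin ler_nat size_undup.
apply: ereal_inf_lbound; exists (size (undup s)) => //.
exists (fun i => f (tnth u i)); split.
  by move=> i j /injf /inj_u.
suff -> : range (fun i => f (tnth u i)) = [set f t | t in [set t | t \in s]] by [].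
apply/seteqP; split => [_ [i _ <-] | _ [t st <-]].
  by exists (tnth u i); rewrite //= -mem_undup mem_tnth.
by have /tnthP[i ->] : t \in u by rewrite mem_undup.
Qed.

Variables (k : nat) (v : 'I_k -> U).
Hypotheses (hF : forall x u, F x u !=set0) (hcov : is_cover F Q v).

Definition adm_rel : rel 'I_k :=
  fun a b => `[< exists2 x, Qu F Q (v a) x & F x (v a) `&` Qu F Q (v b) !=set0 >].

Section Viable.
Variables (x : X) (a0 : 'I_k).
Hypothesis hx : Qu F Q (v a0) x.

(* [Iw t j] is the set I^j_w(x) of the word w = v a0, v t_0, v t_1, ... *)
Local Notation Iw t := (Iset F Q x (map v (a0 :: t))).

Definition viable (t : seq 'I_k) := forall j, (j <= size t)%N -> Iw t j !=set0.

Lemma Iw_sub_Qu t j a : onth (map v (a0 :: t)) j = Some a -> Iw t j `<=` Qu F Q a.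
Proof. exact: Iset_sub_Qu. Qed.

Lemma onth_map_last t : onth (map v (a0 :: t)) (size t) = Some (v (last a0 t)).
Proof. by rewrite onth_map onth_last. Qed.

Lemma Iw_cat t s j : (j <= size t)%N -> Iw (t ++ s) j = Iw t j.
Proof. by move=> ?; rewrite -cat_cons map_cat Iset_cat // size_map. Qed.

Lemma Iw_rcons t c y : Iw (rcons t c) (size t).+1 y <->
  (exists2 z, Iw t (size t) z & F z (v (last a0 t)) y) /\ Qu F Q (v c) y.
Proof.
rewrite -cats1 IsetS Iw_cat // -cat_cons map_cat !onth_cat size_map /= ltnSn ltnn subnn.
rewrite onth_map_last; split => [[_ [_ [[<-] [[<-] []]]]] // | [fy qy]].
by exists (v (last a0 t)), (v c).
Qed.

Lemma viable_take t i : viable t -> viable (take i t).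
Proof.
move=> vt j lej; rewrite -(Iw_cat (drop i t)) // cat_take_drop.
by apply: vt; apply: leq_trans lej _; rewrite size_take_min geq_minr.
Qed.

Lemma viable_rcons_cover t z y : Iw t (size t) z -> F z (v (last a0 t)) y ->
  exists c, Iw (rcons t c) (size t).+1 y.
Proof.
move=> hz fzy; have [c qy] := hcov ((Iw_sub_Qu (onth_map_last t) hz).2 _ fzy).
by exists c; apply/Iw_rcons; split=> //; exists z.
Qed.

Lemma viable_rcons t c : viable t -> Iw (rcons t c) (size t).+1 !=set0 -> viable (rcons t c).
Proof.
move=> vt ne j; rewrite size_rcons leq_eqVlt ltnS => /predU1P[-> //| lej].
by rewrite -cats1 Iw_cat //; apply: vt.
Qed.

Lemma viable_extend t m : viable t -> exists s, size s = m /\ viable (t ++ s).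
Proof.
elim: m t => [|m IHm] t vt; first by exists [::]; rewrite cats0.
have [z hz] := vt _ (leqnn _); have [y fzy] := hF z (v (last a0 t)).
have [c hc] := viable_rcons_cover hz fzy.
have [s [<- vs]] := IHm _ (viable_rcons vt (ex_intro _ y hc)).
by exists (c :: s); rewrite -cat_rcons.
Qed.

Lemma viable_branch p z y m : viable p -> Iw p (size p) z -> F z (v (last a0 p)) y ->
  exists c s, [/\ size s = m, viable (rcons p c ++ s) & Qu F Q (v c) y].
Proof.
move=> vp hz fzy; have [c hc] := viable_rcons_cover hz fzy.
have [s [sz vs]] := viable_extend m (viable_rcons vp (ex_intro _ y hc)).
by exists c, s; split=> //; case/Iw_rcons: hc.
Qed.

Lemma viable_path t : viable t -> path adm_rel a0 t.
Proof.
elim/last_ind: t => [//|t c IHt] vt; rewrite rcons_path IHt /=; last first.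
  by have := viable_take (i := size t) vt; rewrite -cats1 take_size_cat.
have [y /Iw_rcons[[z hz fzy] qy]] : Iw (rcons t c) (size t).+1 !=set0.
  by apply: vt; rewrite size_rcons.
apply/asboolP; exists z; first by apply: (Iw_sub_Qu (onth_map_last t)); exact: hz.
by exists y.
Qed.

Definition adm_words N := [set map v (a0 :: t) | t in [set t | size t = N /\ viable t]].

Lemma adm_point_words N : adm_point F N.+1 Q (adm_words N) x.
Proof.
split; first exact: hx.1.
move=> _ [t [st vt] <-]; split=> [i ltiN|a wa y [z hz fzy]]; last first.
  exact: (Iw_sub_Qu wa hz).2.
split=> [a wa y [z hz fzy]|]; last by apply: vt; rewrite st -ltnS.
have [p [q [sp ept]]] : exists p q, size p = i /\ t = p ++ q.
  by exists (take i t), (drop i t); rewrite cat_take_drop size_take st -ltnS ltiN.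
subst i t; rewrite Iw_cat // in hz.
move: wa; rewrite -cat_cons map_cat onth_cat size_map ltnSn onth_map_last => -[ea].
have vp : viable p by have := viable_take (i := size p) vt; rewrite take_size_cat.
rewrite -ea in fzy; have [c [s [sz vs qy]]] := viable_branch (size q).-1 vp hz fzy.
exists (map v (a0 :: rcons p c ++ s)), (v c).
have eW : map v (a0 :: rcons p c ++ s) = map v (a0 :: p) ++ map v (c :: s).
  by rewrite cat_rcons -cat_cons map_cat.
split.
  exists (rcons p c ++ s) => //; split=> //.
  by move: st ltiN; rewrite !size_cat size_rcons sz; lia.
by rewrite eW !take_size_cat ?size_map // onth_cat size_map ltnn subnn.
Qed.

Lemma admissible_words N : admissible_family F N.+1 Q (adm_words N).
Proof.
have v0 : viable [::] by move=> [|j] // _; exists x.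
split=> //; split; first by move=> _ [t [st _] <-]; rewrite /words /= size_map st.
split; first by have [s [sz vs]] := viable_extend N v0; exists (map v (a0 :: s)), s.
split; first by move=> _ _ [t1 _ <-] [t2 _ <-].
by exists x; exact: adm_point_words.
Qed.

End Viable.

Lemma spanning_all_paths N :
  spanning F N.+1 Q [set map v t | t in [set t | t \in all_paths adm_rel N]].
Proof.
split=> [_ [_ /allpairsPdep[a [p [_ + ->]]] <-] | x qx].
  by rewrite mem_paths /words /= size_map => /andP[/eqP <-].
have [a0 hx] := hcov qx; exists (adm_words x a0 N).
split; last by split; [exact: admissible_words | exact: adm_point_words].
move=> _ [t [st vt] <-]; exists (a0 :: t) => //.
exact: mem_all_paths st (viable_path hx vt).
Qed.

End AdmissibleWords.

Lemma geometric_rec_bound (R : realFieldType) (u : nat -> R) (c d r : R) :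
  0 <= c < r -> 0 <= d -> 0 <= u 0 ->
  (forall n, u n.+1 <= d * r ^+ n + c * u n) ->
  forall n, u n <= (u 0 + d / (r - c)) * r ^+ n.
Proof.
move=> /andP[c0 ltcr] d0 u00 rec; set E := _ + _.
have rc0 : 0 < r - c by rewrite subr_gt0.
have step : d + c * E <= E * r.
  have -> : E * r = u 0 * (r - c) + d + c * E by rewrite /E; field; rewrite gt_eqF.
  by rewrite lerD2r lerDr mulr_ge0 // ltW.
elim=> [|n IHn]; first by rewrite expr0 mulr1 lerDl divr_ge0 // ltW.
have rn0 : 0 <= r ^+ n by rewrite exprn_ge0 // (le_trans c0) // ltW.
rewrite exprS mulrA; apply: le_trans (rec n) (le_trans _ (ler_wpM2r rn0 step)).
by rewrite mulrDl -mulrA lerD2l ler_wpM2l.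
Qed.

Section SpectralBound.
Variable R : realType.
Local Notation normc := (@Normc.normc R).

Lemma normc_ge0 (z : R[i]) : 0 <= normc z.
Proof. by case: z => a b; exact: sqrtr_ge0. Qed.

Lemma normc_nat m : normc m%:R = m%:R.
Proof. by have := @normcMn R 1 m; rewrite Normc.normc1. Qed.

Lemma mxsum_mul_expn_bound k (M B : 'M[R[i]]_k) (s : seq R[i]) (r : R) : 0 < r ->
  (forall z, z \in s -> normc z < r) -> B * \prod_(z <- s) (M - z%:M) = 0 ->
  exists2 D, 0 < D & forall n, normc (mxsum (B * M ^+ n)) <= D * r ^+ n.
Proof.
(* Peel off the factor M - z: x_n := mxsum (B M^n) satisfies
   x_{n+1} = mxsum (B (M - z) M^n) + z x_n. *)
move=> r0; elim: s B => [|z s IHs] B lts.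
  rewrite big_nil mulr1 => ->; exists 1 => // n.
  by rewrite mul0r mxsum0 Normc.normc0 mul1r exprn_ge0 // ltW.
rewrite big_cons mulrA => /IHs[|D' D'0 bound].
  by move=> w ws; apply: lts; rewrite inE ws orbT.
have ltzr : normc z < r by apply: lts; rewrite inE eqxx.
pose u n := normc (mxsum (B * M ^+ n)).
have rec n : u n.+1 <= D' * r ^+ n + normc z * u n.
  rewrite /u.
  have -> : B * M ^+ n.+1 = B * (M - z%:M) * M ^+ n + z *: (B * M ^+ n).
    have zB : B * z%:M = z *: B by exact: mul_mx_scalar.
    by rewrite mulrBr zB mulrBl -mulrA -exprS -[z *: B * _]scalemxAl subrK.
  rewrite mxsumD mxsumZ; apply: le_trans (le_normcD _ _) _.
  by rewrite Normc.normcM lerD2r bound.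
exists (u 0%N + D' / (r - normc z)); last first.
  by apply: geometric_rec_bound; rewrite ?normc_ge0 ?ltzr ?ltW.
by rewrite ltr_wpDl ?normc_ge0 // divr_gt0 // subr_gt0.
Qed.

Lemma char_poly_split k (M : 'M[R[i]]_k) :
  exists rs, char_poly M = \prod_(z <- rs) ('X - z%:P).
Proof.
have [rs hrs] := closed_field_poly_normal (char_poly M).
by exists rs; rewrite {1}hrs (monicP (char_poly_monic M)) scale1r.
Qed.

Lemma has_ubound_spectrum k (M : 'M[R[i]]_k) :
  has_ubound ([set 0] `|` [set normc l | l in [set l : R[i] | eigenvalue M l]]).
Proof.
have [rs hrs] := char_poly_split M; have sum_ge0 := sumr_ge0 _ (fun z _ => normc_ge0 z).
exists (\sum_(z <- rs) normc z) => _ [-> | [l ev <-]]; first exact: sum_ge0.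
have lrs : l \in rs by rewrite -root_prod_XsubC -hrs -eigenvalue_root_char.
by rewrite (perm_big _ (perm_to_rem lrs)) big_cons lerDl sum_ge0.
Qed.

Lemma spectral_radius_ge0 k (M : 'M[R[i]]_k) : 0 <= spectral_radius M.
Proof. by apply: (ub_le_sup (has_ubound_spectrum M)); left. Qed.

Lemma normc_eigenvalue_le k (M : 'M[R[i]]_k) l :
  eigenvalue M l -> normc l <= spectral_radius M.
Proof. by move=> ev; apply: (ub_le_sup (has_ubound_spectrum M)); right; exists l. Qed.

Lemma mxsum_expn_bound k (M : 'M[R[i]]_k) r : spectral_radius M < r ->
  exists2 D, 0 < D & forall n, normc (mxsum (M ^+ n)) <= D * r ^+ n.
Proof.
move=> ltr; have r0 := le_lt_trans (spectral_radius_ge0 M) ltr.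
case: k M ltr => [|k] M ltr.
  by exists 1 => // n; rewrite /mxsum big_ord0 Normc.normc0 mul1r exprn_ge0 // ltW.
have [rs hrs] := char_poly_split M.
have [||D D0 bound] := @mxsum_mul_expn_bound _ M 1 rs r r0.
- move=> z; rewrite -root_prod_XsubC -hrs -eigenvalue_root_char.
  by move/normc_eigenvalue_le/le_lt_trans; apply.
- rewrite mul1r; have := Cayley_Hamilton M; rewrite hrs rmorph_prod => <-.
  by apply: eq_bigr => z _; rewrite rmorphB /= horner_mx_X horner_mx_C.
by exists D => // n; rewrite -[M ^+ n]mul1r.
Qed.

End SpectralBound.

Section Log2Bounds.
Variable R : realType.

Lemma ln2_gt0 : 0 < ln (2 : R).
Proof. by rewrite ln_gt0 // ltr1n. Qed.

Lemma log2_expR (t : R) : log2 (expR t) = (t / ln 2)%:E.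
Proof. by rewrite /log2 gt_eqF ?expR_gt0 // expRK. Qed.

Lemma le_log2_of_gt (y : \bar R) (rho : R) : 0 <= rho ->
  (forall r, rho < r -> (y <= log2 r)%E) -> (y <= log2 rho)%E.
Proof.
move=> rho0; have ln2_neq0 : ln (2 : R) != 0 by rewrite gt_eqF ?ln2_gt0.
case: (eqVneq rho 0) => [-> | rho_neq0] le_y.
  rewrite /log2 eqxx; suff -> : y = -oo%E by [].
  apply: eq_ninfty => s.
  by have := le_y _ (expR_gt0 (s * ln 2)); rewrite log2_expR (mulfK ln2_neq0).
have rho_gt0 : 0 < rho by rewrite lt_def rho_neq0.
rewrite /log2 (negbTE rho_neq0); apply/lee_addgt0Pr => e e0.
have := le_y (expR (ln rho + e * ln 2)); rewrite log2_expR mulrDl (mulfK ln2_neq0) EFinD; apply.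
by rewrite -ltr_ln ?posrE ?expR_gt0 // expRK ltrDl mulr_gt0 ?ln2_gt0.
Qed.

Lemma limn_esup_le_eventually (u : (\bar R)^nat) (y : \bar R) N0 :
  (forall n, (N0 <= n)%N -> (u n <= y)%E) -> (limn_esup u <= y)%E.
Proof.
move=> le_uy; rewrite limn_esup_lim; apply: lime_le; first exact: is_cvg_esups.
exists N0 => // m /= leN0m; apply/ereal_supP => _ [n /= lemn <-].
exact/le_uy/(leq_trans leN0m).
Qed.

Lemma limn_esup_log2_le (u : (\bar R)^nat) (D r : R) : 0 < D -> 0 < r ->
  (forall n, (0 < n)%N -> (0 <= u n <= (D * r ^+ n)%:E)%E) ->
  (limn_esup (fun n => (n%:R^-1)%:E * elog2 (u n)) <= log2 r)%E.
Proof.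
move=> D0 r0 bound; have ln2 := ln2_gt0.
rewrite /log2 gt_eqF //; apply/lee_addgt0Pr => e e0.
have eln2 : 0 < e * ln 2 by rewrite mulr_gt0.
pose N0 := (Num.Def.archi_bound (`|ln D| / (e * ln 2))).+1.
apply: (@limn_esup_le_eventually _ _ N0) => n leN0n.
have n0 : (0 < n)%N by apply: leq_trans leN0n.
have n0R : 0 < (n%:R : R) by rewrite ltr0n.
have lnD : ln D <= n%:R * (e * ln 2).
  rewrite (le_trans (ler_norm _)) // -ler_pdivrMr //; apply/ltW.
  apply: lt_le_trans (archi_boundP _) _; first by rewrite divr_ge0 // ltW.
  by rewrite ler_nat; apply: ltnW.
have /andP[] := bound n n0; case: (u n) => [x| |] //=; rewrite !lee_fin => x0 xD.
rewrite /log2; have [_ | x_neq0] := eqVneq x 0.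
  by rewrite mulrNy gtr0_sg ?invr_gt0 // mul1e leNye.
have x_gt0 : 0 < x by rewrite lt_def x_neq0.
have lnx : ln x <= n%:R * (ln r + e * ln 2).
  rewrite (@le_trans _ _ (ln (D * r ^+ n))) ?ler_ln ?posrE ?mulr_gt0 ?exprn_gt0 //.
  by rewrite lnM ?posrE ?exprn_gt0 // lnXn // mulrDr mulr_natl [ln D + _]addrC lerD2l.
rewrite -EFinD -[X in (X <= _)%E]/(EFin _) lee_fin.
have -> : ln r / ln 2 + e = n%:R^-1 * (n%:R * (ln r + e * ln 2) / ln 2).
  by field; rewrite !gt_eqF.
by rewrite ler_pM2l ?invr_gt0 // ler_pM2r ?invr_gt0.
Qed.

End Log2Bounds.

Theorem proposition3p8 (R : realType) (X U : Type) (F : X -> U -> set X)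
  (hX : inhabited X) (hU : inhabited U)
  (hF : forall x u, F x u !=set0)
  (Q : set X) (hQ : controlled_invariant F Q)
  (k : nat) (v : 'I_k -> U) (hv : injective v) (hcov : is_cover F Q v) :
  (h_inv F R Q <= log2 (spectral_radius (adm_matrix F R Q v)))%E.
Proof.
set M := adm_matrix F R Q v.
apply: le_log2_of_gt (spectral_radius_ge0 M) _ => r ltr.
have r0 := le_lt_trans (spectral_radius_ge0 M) ltr.
have [D D0 bound] := mxsum_expn_bound ltr.
apply: (limn_esup_log2_le (divr_gt0 D0 r0) r0) => -[//|N] _.
rewrite r_inv_ge0 /=.
apply: le_trans (r_inv_le_size R (inj_map hv) (spanning_all_paths hF hcov N)) _.
rewrite lee_fin exprS mulrA (divfK (lt0r_neq0 r0)) -normc_nat size_all_paths.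
exact: bound.
Qed.
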